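(* Let $n>1$ and $m$ be integers with $0<m<n$. (i) Suppose $m\geq\frac n2$. Then the map $\mathcal{F}^{\leq\frac12}(n,m)\to\mathcal{F}^{\leq\frac12}(n,m)$, $\tfrac hk\mapsto\tfrac{k-2h}{2k-3h}$, is well defined, order-reversing and bijective; the map $\mathcal{F}^{\leq\frac12}(n,m)\to\mathcal{F}^{\geq\frac12}(n,m)$, $\tfrac hk\mapsto\tfrac{k-h}{2k-3h}$, is well defined, order-preserving and injective; and the map $\mathcal{F}^{\leq\frac12}(n,m)\to\mathcal{F}^{\geq\frac12}(n,m)$, $\tfrac hk\mapsto\tfrac{k-h}{k}$, is well defined, order-reversing and injective. (ii) Suppose $m\leq\frac n2$. Then the map $\mathcal{F}^{\geq\frac12}(n,m)\to\mathcal{F}^{\geq\frac12}(n,m)$, $\tfrac hk\mapsto\tfrac{h}{3h-k}$, is well defined, order-reversing and bijective; the map $\mathcal{F}^{\geq\frac12}(n,m)\to\mathcal{F}^{\leq\frac12}(n,m)$, $\tfrac hk\mapsto\tfrac{2h-k}{3h-k}$, is well defined, order-preserving and injective; and the map $\mathcal{F}^{\geq\frac12}(n,m)\to\mathcal{F}^{\leq\frac12}(n,m)$, $\tfrac hk\mapsto\tfrac{k-h}{k}$, is well defined, order-reversing and injective.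
   Context: For an integer $n\geq 1$, the Farey sequence $\mathcal{F}_n$ is the ascending sequence of irreducible fractions $\tfrac hk$ (with $h\ge0$, $k\ge1$, $\gcd(h,k)=1$) such that $\tfrac01\leq\tfrac hk\leq\tfrac11$ and $1\leq k\leq n$. For $0<m<n$, let $\mathcal{F}(n,m):=\left(\tfrac hk\in\mathcal{F}_n:\ h\leq m,\ k-h\leq n-m\right)$ (the Farey subsequence associated with an element of rank $m$ in the Boolean lattice of rank $n$). Its left halfsequence is $\mathcal{F}^{\leq\frac12}(n,m):=\left(\tfrac hk\in\mathcal{F}(n,m):\ \tfrac hk\leq\tfrac12\right)$ and its right halfsequence is $\mathcal{F}^{\geq\frac12}(n,m):=\left(\tfrac hk\in\mathcal{F}(n,m):\ \tfrac hk\geq\tfrac12\right)$. All sequences are ordered as rational numbers and fractions are written in lowest terms. *)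

(* Fractions h/k in lowest terms are represented by rationals
   x : rat, with h = numq x and k = denq x (rat is always normalized). *)
From mathcomp Require Import all_boot all_order all_algebra.
Set Implicit Arguments. Unset Strict Implicit. Unset Printing Implicit Defensive.
Import Order.TTheory GRing.Theory Num.Theory.
Local Open Scope ring_scope.

Definition farey_sub (n m : nat) (x : rat) : bool :=
  [&& 0 <= x, x <= 1, denq x <= n%:Z, numq x <= m%:Z
    & denq x - numq x <= n%:Z - m%:Z].

Definition farey_left (n m : nat) (x : rat) : bool :=
  farey_sub n m x && (x <= 2^-1).
Definition farey_right (n m : nat) (x : rat) : bool :=
  farey_sub n m x && (2^-1 <= x).

Definition mapL1 (x : rat) : rat :=
  (denq x - 2 * numq x)%:~R / (2 * denq x - 3 * numq x)%:~R.
Definition mapL2 (x : rat) : rat :=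
  (denq x - numq x)%:~R / (2 * denq x - 3 * numq x)%:~R.
Definition mapR1 (x : rat) : rat :=
  (numq x)%:~R / (3 * numq x - denq x)%:~R.
Definition mapR2 (x : rat) : rat :=
  (2 * numq x - denq x)%:~R / (3 * numq x - denq x)%:~R.
Definition mapC (x : rat) : rat :=
  (denq x - numq x)%:~R / (denq x)%:~R.

From mathcomp Require Import all_boot all_order all_algebra zify ring.
Import Order.TTheory GRing.Theory Num.Theory.
Local Open Scope ring_scope.

(* Each map of the proposition sends h/k to (p h + q k)/(r h + s k) for an
   integer matrix [[p, q], [r, s]] of determinant +1 or -1.  Unimodularity keeps
   the image fraction reduced, so its numerator and denominator are the two
   linear forms, and membership in the halfsequences becomes a system of linear
   inequalities in (h, k).  Cross-multiplying two images multiplies the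
   cross-product of the arguments by the determinant, which fixes the
   monotonicity; the two self-maps come from involutive matrices, hence are
   bijective. *)

Lemma ltr_ratE (x y : rat) : (x < y) = (numq x * denq y < numq y * denq x).
Proof. exact: lt_ratE. Qed.

Definition mobius (p q r s : int) (x : rat) : rat :=
  (p * numq x + q * denq x)%:~R / (r * numq x + s * denq x)%:~R.

Section Mobius.
Variables p q r s : int.

Lemma coprimez_unimodular (a b : int) : (p * s - q * r) ^+ 2 = 1 ->
  coprimez a b -> coprimez (p * a + q * b) (r * a + s * b).
Proof.
move=> det2 /coprimezP[[u v] /= uv]; apply/coprimezP.
(* The adjugate [[s, -q], [-r, p]] recovers (a, b) up to the determinant. *)
exists ((p * s - q * r) * (u * s - v * r), (p * s - q * r) * (v * p - u * q)) => /=.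
by rewrite -det2 -[RHS]mulr1 -uv; ring.
Qed.

Section NumDen.
Variable x : rat.
Hypotheses (det2 : (p * s - q * r) ^+ 2 = 1) (den_gt0 : 0 < r * numq x + s * denq x).

Let mobius_coprime : coprime `|p * numq x + q * denq x| `|r * numq x + s * denq x|.
Proof. exact: coprimez_unimodular (coprime_num_den x). Qed.

Lemma numq_mobius : numq (mobius p q r s x) = p * numq x + q * denq x.
Proof. by rewrite /mobius coprimeq_num // gtr0_sg // mul1r. Qed.

Lemma denq_mobius : denq (mobius p q r s x) = r * numq x + s * denq x.
Proof. by rewrite /mobius coprimeq_den // gt_eqF // gtr0_norm. Qed.

End NumDen.

Lemma mobius_lt (x y : rat) : (p * s - q * r) ^+ 2 = 1 ->
  0 < r * numq x + s * denq x -> 0 < r * numq y + s * denq y ->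
  (mobius p q r s x < mobius p q r s y) =
  (0 < (p * s - q * r) * (numq y * denq x - numq x * denq y)).
Proof.
move=> det2 dx dy.
rewrite ltr_ratE !numq_mobius // !denq_mobius // -subr_gt0.
by congr (0 < _); ring.
Qed.

Variable D : {pred rat}.
Hypothesis den_gt0 : {in D, forall x, 0 < r * numq x + s * denq x}.

Lemma mobius_homo_in : p * s - q * r = 1 ->
  {in D &, {homo mobius p q r s : x y / x < y}}.
Proof.
move=> det x y Dx Dy xy.
by rewrite mobius_lt ?den_gt0 ?det ?expr1n // mul1r subr_gt0 -ltr_ratE.
Qed.

Lemma mobius_nhomo_in : p * s - q * r = -1 ->
  {in D &, {homo mobius p q r s : x y / x < y >-> y < x}}.
Proof.
move=> det x y Dx Dy xy.
by rewrite mobius_lt ?den_gt0 ?det ?sqrrN ?expr1n // mulN1r oppr_gt0 subr_lt0 -ltr_ratE.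
Qed.

End Mobius.

Lemma mobius_comp (a b c d p q r s : int) (x : rat) :
  (p * s - q * r) ^+ 2 = 1 -> 0 < r * numq x + s * denq x ->
  mobius a b c d (mobius p q r s x) =
  mobius (a * p + b * r) (a * q + b * s) (c * p + d * r) (c * q + d * s) x.
Proof.
move=> det2 den_gt0; rewrite {1}/mobius numq_mobius // denq_mobius //.
by congr (_%:~R / _%:~R); ring.
Qed.

Lemma mobius1 (x : rat) : mobius 1 0 0 1 x = x.
Proof. by rewrite /mobius !mul1r !mul0r addr0 add0r divq_num_den. Qed.

Lemma nhomo_lt_inj_in d d' (T : orderType d) (T' : porderType d')
    (D : {pred T}) (f : T -> T') :
  {in D &, {homo f : x y / (x < y)%O >-> (y < x)%O}} -> {in D &, injective f}.
Proof.
move=> f_nhomo; apply: dec_inj_in; apply: le_nmono_in => x y Dx Dy.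
exact: f_nhomo.
Qed.

Lemma involutive_in_onto (T : Type) (D : pred T) (f : T -> T) :
  (forall x, D x -> D (f x)) -> {in D, involutive f} ->
  forall y, D y -> exists2 x, D x & f x = y.
Proof. by move=> fD fK y Dy; exists (f y); [apply: fD | apply: fK]. Qed.

Lemma mapL1E : mapL1 =1 mobius (-2) 1 (-3) 2.
Proof. by move=> x; rewrite /mapL1 /mobius; congr (_%:~R / _%:~R); ring. Qed.

Lemma mapL2E : mapL2 =1 mobius (-1) 1 (-3) 2.
Proof. by move=> x; rewrite /mapL2 /mobius; congr (_%:~R / _%:~R); ring. Qed.

Lemma mapR1E : mapR1 =1 mobius 1 0 3 (-1).
Proof. by move=> x; rewrite /mapR1 /mobius; congr (_%:~R / _%:~R); ring. Qed.

Lemma mapR2E : mapR2 =1 mobius 2 (-1) 3 (-1).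
Proof. by move=> x; rewrite /mapR2 /mobius; congr (_%:~R / _%:~R); ring. Qed.

Lemma mapCE : mapC =1 mobius (-1) 1 0 1.
Proof. by move=> x; rewrite /mapC /mobius; congr (_%:~R / _%:~R); ring. Qed.

Lemma mapC_den_gt0 x : 0 < 0 * numq x + 1 * denq x.
Proof. by rewrite mul0r add0r mul1r denq_gt0. Qed.

Lemma mapC_nhomo (D : {pred rat}) : {in D &, forall x y, x < y -> mapC y < mapC x}.
Proof.
move=> x y Dx Dy; rewrite !mapCE.
exact: (@mobius_nhomo_in _ _ _ _ D (fun x _ => mapC_den_gt0 x)).
Qed.

Section Farey.
Variables n m : nat.

Definition farey_pair (h k : int) : bool :=
  [&& 0 <= h, h <= k, k <= n%:Z, h <= m%:Z & k - h <= n%:Z - m%:Z].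

Lemma farey_subE x : farey_sub n m x = farey_pair (numq x) (denq x).
Proof.
rewrite /farey_sub /farey_pair -numq_ge0 -[x <= 1]/(le_rat x 1) le_ratE.
by have [-> ->] : numq 1 = 1 /\ denq 1 = 1 by []; rewrite mulr1 mul1r.
Qed.

Lemma farey_leftE x :
  farey_left n m x = farey_pair (numq x) (denq x) && (2 * numq x <= denq x).
Proof.
rewrite /farey_left farey_subE -[x <= 2^-1]/(le_rat x 2^-1) le_ratE.
by have [-> ->] : numq 2^-1 = 1 /\ denq 2^-1 = 2 by []; rewrite mul1r mulrC.
Qed.

Lemma farey_rightE x :
  farey_right n m x = farey_pair (numq x) (denq x) && (denq x <= 2 * numq x).
Proof.
rewrite /farey_right farey_subE -[2^-1 <= x]/(le_rat 2^-1 x) le_ratE.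
by have [-> ->] : numq 2^-1 = 1 /\ denq 2^-1 = 2 by []; rewrite mul1r mulrC.
Qed.

Lemma farey_left_den_gt0 x : farey_left n m x -> 0 < -3 * numq x + 2 * denq x.
Proof. by rewrite farey_leftE /farey_pair; have := denq_gt0 x; lia. Qed.

Lemma farey_right_den_gt0 x : farey_right n m x -> 0 < 3 * numq x + -1 * denq x.
Proof. by rewrite farey_rightE /farey_pair; have := denq_gt0 x; lia. Qed.

Lemma mapL1_nhomo : {in farey_left n m &, forall x y, x < y -> mapL1 y < mapL1 x}.
Proof.
move=> x y Dx Dy; rewrite !mapL1E.
exact: (@mobius_nhomo_in _ _ _ _ (farey_left n m) farey_left_den_gt0).
Qed.

Lemma mapL2_homo : {in farey_left n m &, forall x y, x < y -> mapL2 x < mapL2 y}.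
Proof.
move=> x y Dx Dy; rewrite !mapL2E.
exact: (@mobius_homo_in _ _ _ _ (farey_left n m) farey_left_den_gt0).
Qed.

Lemma mapR1_nhomo : {in farey_right n m &, forall x y, x < y -> mapR1 y < mapR1 x}.
Proof.
move=> x y Dx Dy; rewrite !mapR1E.
exact: (@mobius_nhomo_in _ _ _ _ (farey_right n m) farey_right_den_gt0).
Qed.

Lemma mapR2_homo : {in farey_right n m &, forall x y, x < y -> mapR2 x < mapR2 y}.
Proof.
move=> x y Dx Dy; rewrite !mapR2E.
exact: (@mobius_homo_in _ _ _ _ (farey_right n m) farey_right_den_gt0).
Qed.

Lemma mapL1K : {in farey_left n m, involutive mapL1}.
Proof.
move=> x Dx; rewrite !mapL1E mobius_comp //; last exact: farey_left_den_gt0.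
exact: mobius1.
Qed.

Lemma mapR1K : {in farey_right n m, involutive mapR1}.
Proof.
move=> x Dx; rewrite !mapR1E mobius_comp //; last exact: farey_right_den_gt0.
exact: mobius1.
Qed.

Section LargeRank.
Hypothesis n_le_2m : (n <= 2 * m)%N.

Lemma mapL1_left x : farey_left n m x -> farey_left n m (mapL1 x).
Proof.
move=> Dx; have den := farey_left_den_gt0 x Dx; move: Dx.
rewrite !farey_leftE /farey_pair mapL1E numq_mobius // denq_mobius //.
by have := denq_gt0 x; lia.
Qed.

Lemma mapL2_right x : farey_left n m x -> farey_right n m (mapL2 x).
Proof.
move=> Dx; have den := farey_left_den_gt0 x Dx; move: Dx.
rewrite farey_leftE farey_rightE /farey_pair mapL2E numq_mobius // denq_mobius //.
by have := denq_gt0 x; lia.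
Qed.

Lemma mapC_right x : farey_left n m x -> farey_right n m (mapC x).
Proof.
have den := mapC_den_gt0 x.
rewrite farey_leftE farey_rightE /farey_pair mapCE numq_mobius // denq_mobius //.
by have := denq_gt0 x; lia.
Qed.

End LargeRank.

Section SmallRank.
Hypothesis two_m_le_n : (2 * m <= n)%N.

Lemma mapR1_right x : farey_right n m x -> farey_right n m (mapR1 x).
Proof.
move=> Dx; have den := farey_right_den_gt0 x Dx; move: Dx.
rewrite !farey_rightE /farey_pair mapR1E numq_mobius // denq_mobius //.
by have := denq_gt0 x; lia.
Qed.

Lemma mapR2_left x : farey_right n m x -> farey_left n m (mapR2 x).
Proof.
move=> Dx; have den := farey_right_den_gt0 x Dx; move: Dx.
rewrite farey_leftE farey_rightE /farey_pair mapR2E numq_mobius // denq_mobius //.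
by have := denq_gt0 x; lia.
Qed.

Lemma mapC_left x : farey_right n m x -> farey_left n m (mapC x).
Proof.
have den := mapC_den_gt0 x.
rewrite farey_leftE farey_rightE /farey_pair mapCE numq_mobius // denq_mobius //.
by have := denq_gt0 x; lia.
Qed.

End SmallRank.

End Farey.

Theorem proposition3 (n m : nat) (hn : (1 < n)%N) (hm0 : (0 < m)%N) (hmn : (m < n)%N) :
  ((n <= 2 * m)%N ->
     ((forall x, farey_left n m x -> farey_left n m (mapL1 x)) /\
      {in farey_left n m &, forall x y, x < y -> mapL1 y < mapL1 x} /\
      {in farey_left n m &, injective mapL1} /\
      (forall y, farey_left n m y -> exists2 x, farey_left n m x & mapL1 x = y)) /\
     ((forall x, farey_left n m x -> farey_right n m (mapL2 x)) /\
      {in farey_left n m &, forall x y, x < y -> mapL2 x < mapL2 y} /\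
      {in farey_left n m &, injective mapL2}) /\
     ((forall x, farey_left n m x -> farey_right n m (mapC x)) /\
      {in farey_left n m &, forall x y, x < y -> mapC y < mapC x} /\
      {in farey_left n m &, injective mapC})) /\
  ((2 * m <= n)%N ->
     ((forall x, farey_right n m x -> farey_right n m (mapR1 x)) /\
      {in farey_right n m &, forall x y, x < y -> mapR1 y < mapR1 x} /\
      {in farey_right n m &, injective mapR1} /\
      (forall y, farey_right n m y -> exists2 x, farey_right n m x & mapR1 x = y)) /\
     ((forall x, farey_right n m x -> farey_left n m (mapR2 x)) /\
      {in farey_right n m &, forall x y, x < y -> mapR2 x < mapR2 y} /\
      {in farey_right n m &, injective mapR2}) /\
     ((forall x, farey_right n m x -> farey_left n m (mapC x)) /\
      {in farey_right n m &, forall x y, x < y -> mapC y < mapC x} /\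
      {in farey_right n m &, injective mapC})).
Proof.
split=> hnm; do !split.
- exact: mapL1_left.
- exact: mapL1_nhomo.
- exact: nhomo_lt_inj_in (@mapL1_nhomo n m).
- exact: involutive_in_onto (@mapL1_left n m hnm) (@mapL1K n m).
- exact: mapL2_right.
- exact: mapL2_homo.
- exact: inc_inj_in (le_mono_in (@mapL2_homo n m)).
- exact: mapC_right.
- exact: mapC_nhomo.
- exact: nhomo_lt_inj_in (mapC_nhomo _).
- exact: mapR1_right.
- exact: mapR1_nhomo.
- exact: nhomo_lt_inj_in (@mapR1_nhomo n m).
- exact: involutive_in_onto (@mapR1_right n m hnm) (@mapR1K n m).
- exact: mapR2_left.
- exact: mapR2_homo.
- exact: inc_inj_in (le_mono_in (@mapR2_homo n m)).
- exact: mapC_left.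
- exact: mapC_nhomo.
- exact: nhomo_lt_inj_in (mapC_nhomo _).
Qed.
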